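(* Let $\mathcal{H}=\bigotimes_{i=1}^n\mathbb{C}^{d_i}$ and let $|\psi\rangle,|\phi\rangle\in\mathcal{H}$ be fully entangled pure states. If there exists a map $\Lambda\in\mathrm{LOCC}_{\mathbb{N}}$ with $\Lambda(|\psi\rangle\langle\psi|)=|\phi\rangle\langle\phi|$, then there exists a map $\Lambda'\in\mathrm{SEP}_1$ with $\Lambda'(|\psi\rangle\langle\psi|)=|\phi\rangle\langle\phi|$.
   Context: A pure state in $\bigotimes_{i=1}^n\mathbb{C}^{d_i}$ is fully entangled if each single-party reduced density matrix $\rho_i$ has rank $d_i$. A CPTP map $\Lambda$ on $\mathcal{B}(\mathcal{H})$ is in $\mathrm{SEP}_1$ if it admits a Kraus decomposition $\Lambda(X)=\sum_iK_iXK_i^\dagger$, $\sum_iK_i^\dagger K_i=\mathbb{1}$, with every $K_i=\bigotimes_{j=1}^nK_i^{(j)}$ and $K_i^{(j)}\in GL(d_j,\mathbb{C})$ for all $i,j$. A CPTP map is in $\mathrm{LOCC}_{\mathbb{N}}$ (with $m$ rounds) if it admits a Kraus decomposition with Kraus operators indexed by multi-indices $i=(i_1,\dots,i_m)$, $K_{(i_1\cdots i_m)}=L_{i_m}(\{i_j\}_{j<m})\cdots L_{i_1}$, where each $L_{i_k}(\{i_j\}_{j<k})=U^{(1)}_{i_k}\otimes\cdots\otimes U^{(s_k-1)}_{i_k}\otimes P^{(s_k)}_{i_k}\otimes U^{(s_k+1)}_{i_k}\otimes\cdots\otimes U^{(n)}_{i_k}$ (all factors depending on $\{i_j\}_{j<k}$),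 the $U$'s are unitary, the party $s_k=s_k(\{i_j\}_{j<k})$, and $\sum_{i_k}(P^{(s_k)}_{i_k})^\dagger P^{(s_k)}_{i_k}=\mathbb{1}$ for every value of $\{i_j\}_{j<k}$; i.e. in each round one party performs a generalized measurement, broadcasts the outcome, and the other parties apply unitaries depending on all previous outcomes. *)

From HB Require Import structures.
From mathcomp Require Import all_boot all_order all_algebra.
From mathcomp Require Import reals.
From mathcomp Require Import complex.
Set Implicit Arguments. Unset Strict Implicit. Unset Printing Implicit Defensive.
Import Order.TTheory GRing.Theory Num.Theory.
Local Open Scope ring_scope.

Section Multipartite.
Variables (R : realType) (n : nat) (d : 'I_n -> nat).

Definition C := (R[i])%C.

(* basis labels of H = (x)_i C^{d_i} : tuples (x_1,...,x_n), x_i < d_i *)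
Definition Basis := {dffun forall i : 'I_n, 'I_(d i)}.
Definition dimH := #|{: Basis}|.

Definition Op := 'M[C]_dimH.
Definition LocOps := forall i : 'I_n, 'M[C]_(d i).

Definition adj {m p : nat} (A : 'M[C]_(m, p)) : 'M[C]_(p, m) :=
  (map_mx (fun z : C => z^*) A)^T.

Definition unitary {m : nat} (U : 'M[C]_m) : Prop := adj U *m U = 1%:M.

Definition tens (K : LocOps) : Op :=
  \matrix_(a < dimH, b < dimH)
    \prod_(i : 'I_n) K i ((enum_val a : Basis) i) ((enum_val b : Basis) i).

Definition proj (psi : 'cV[C]_dimH) : Op := psi *m adj psi.

Definition normalized (psi : 'cV[C]_dimH) : Prop := adj psi *m psi = 1%:M.

(* single-party reduced density matrix rho_i = Tr_{all j <> i} |psi><psi| *)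
Definition reduced (psi : 'cV[C]_dimH) (i : 'I_n) : 'M[C]_(d i) :=
  \matrix_(a < d i, b < d i)
    \sum_(x : Basis | x i == a)
      \sum_(y : Basis | (y i == b) && [forall j, (j != i) ==> (x j == y j)])
         psi (enum_rank x) ord0 * (psi (enum_rank y) ord0)^*.

Definition fully_entangled (psi : 'cV[C]_dimH) : Prop :=
  forall i : 'I_n, \rank (reduced psi i) = d i.

Definition kraus_apply (Ks : seq Op) (X : Op) : Op :=
  \sum_(K <- Ks) K *m X *m adj K.

Definition SEP1_maps (psi phi : 'cV[C]_dimH) : Prop :=
  exists (k : nat) (K : 'I_k -> LocOps),
    (forall (o : 'I_k) (j : 'I_n), K o j \in unitmx) /\
    \sum_(o < k) adj (tens (K o)) *m tens (K o) = 1%:M /\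
    \sum_(o < k) tens (K o) *m proj psi *m adj (tens (K o)) = proj phi.

(* One LOCC round: party s measures with operators P_o^(s) (sum P^dag P = 1),
   every other party j applies a unitary U_o^(j) depending on the outcome o. *)
Definition local_round (Ls : seq Op) : Prop :=
  exists (s : 'I_n) (k : nat) (L : 'I_k -> LocOps),
    Ls = [seq tens (L o) | o <- enum 'I_k] /\
    (forall (o : 'I_k) (j : 'I_n), j != s -> unitary (L o j)) /\
    \sum_(o < k) adj (L o s) *m L o s = 1%:M.

(* Kraus operators K_(i_1...i_m) = L_{i_m}(i_<m) ... L_{i_1} of an m-round
   LOCC protocol; the list is indexed by outcome histories, and the round
   applied after history j (the j-th element) may depend on j. *)
Inductive LOCC_kraus : nat -> seq Op -> Prop :=
| LOCC0 : LOCC_kraus 0 [:: 1%:M]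
| LOCCS (m : nat) (Ks : seq Op) (Ls : nat -> seq Op) :
    LOCC_kraus m Ks ->
    (forall j, (j < size Ks)%N -> local_round (Ls j)) ->
    LOCC_kraus m.+1
      (flatten [seq [seq L *m nth 0 Ks j | L <- Ls j] | j <- iota 0 (size Ks)]).

Definition LOCCN_maps (psi phi : 'cV[C]_dimH) : Prop :=
  exists (m : nat) (Ks : seq Op),
    LOCC_kraus m Ks /\ kraus_apply Ks (proj psi) = proj phi.

End Multipartite.

From HB Require Import structures.
From mathcomp Require Import all_boot all_order all_algebra.
From mathcomp Require Import reals complex.
Import Order.TTheory GRing.Theory Num.Theory.
Local Open Scope ring_scope.
Set Implicit Arguments. Unset Strict Implicit. Unset Printing Implicit Defensive.

(* Every Kraus operator K of an LOCC protocol is a product operator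
   Q_1 ⊗ ... ⊗ Q_n, and since the output is pure, K psi is a multiple of phi.
   A product operator that is the identity off party i and annihilates a fully
   entangled state vanishes, because its factor at i kills the invertible
   reduced state rho_i.  Hence if K psi is a nonzero multiple of phi, every Q_i
   is invertible: a nonzero W with W Q_i = 0, placed at slot i, would
   annihilate phi.
   Kraus operators with K psi = 0 vanish, by induction on the rounds.  Write
   K = L K'.  If K' psi = 0 then K' = 0.  Otherwise completeness of the round
   makes some child of K' keep K' psi nonzero, so the factors of K' are
   invertible; as L is unitary off the measuring party, L K' psi = 0 then
   forces L = 0.  Discarding the zero Kraus operators leaves a SEP_1 map. *)

Lemma prod_sum_dffun (R : comNzRingType) (I : finType) (T_ : I -> finType)
    (F : forall i, T_ i -> R) :
  \prod_(i : I) \sum_(j : T_ i) F i j =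
  \sum_(x : {dffun forall i, T_ i}) \prod_(i : I) F i (x i).
Proof.
pose P_ i := [ffun j => F i j].
rewrite (reindex (@dffun_of_fprod I T_)); last exact/onW_bij/dffun_of_fprod_bij.
transitivity (\sum_(t : fprod T_) \prod_(i in I) P_ i (t i)); last first.
  by apply: eq_bigr => t _; apply: eq_bigr => i _; rewrite !ffunE.
rewrite big_fprod.
transitivity (\prod_(i : I) \sum_(j : T_ i) P_ i j).
  by apply: eq_bigr => i _; apply: eq_bigr => j _; rewrite ffunE.
under eq_bigr => i _ do rewrite (big_tag (fun i j => P_ i j) i).
by rewrite bigA_distr_big_dep.
Qed.

Section Adjoint.
Variable R : realType.
Local Notation CC := (C R).

Lemma adjE m p (A : 'M[CC]_(m, p)) i j : adj A i j = (A j i)^*.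
Proof. by rewrite !mxE. Qed.

Lemma adjM m p q (A : 'M[CC]_(m, p)) (B : 'M[CC]_(p, q)) :
  adj (A *m B) = adj B *m adj A.
Proof.
apply/matrixP => i j; rewrite adjE !mxE rmorph_sum.
by apply: eq_bigr => k _; rewrite rmorphM /= !adjE mulrC.
Qed.

Lemma adjK m p (A : 'M[CC]_(m, p)) : adj (adj A) = A.
Proof. by apply/matrixP => i j; rewrite !adjE conjCK. Qed.

Lemma adj0 m p : adj (0 : 'M[CC]_(m, p)) = 0.
Proof. by apply/matrixP => i j; rewrite adjE !mxE rmorph0. Qed.

Lemma adj_id m : adj (1%:M : 'M[CC]_m) = 1%:M.
Proof. by apply/matrixP => i j; rewrite adjE !mxE eq_sym rmorphMn rmorph1. Qed.

Lemma adj_mul_self_eq0 m (u : 'cV[CC]_m) : (adj u *m u) 0 0 = 0 -> u = 0.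
Proof.
rewrite mxE => u0; apply/matrixP => k z; rewrite ord1 mxE.
have ge0 (l : 'I_m) : true -> 0 <= adj u 0 l * u l 0.
  by rewrite adjE mulrC -normCK exprn_ge0.
have /eqP := psumr_eq0P ge0 u0 (i := k) isT.
by rewrite adjE mulrC -normCK expf_eq0 /= normr_eq0 => /eqP.
Qed.

Lemma kraus_complete_eq0 m (Ls : seq 'M[CC]_m) (v : 'cV[CC]_m) :
  \sum_(L <- Ls) adj L *m L = 1%:M -> {in Ls, forall L, L *m v = 0} -> v = 0.
Proof.
move=> complete Lv0; apply: adj_mul_self_eq0.
rewrite -[v in _ *m v]mul1mx -complete mulmx_suml mulmx_sumr summxE.
rewrite big1_seq // => L /Lv0 Lv.
by rewrite -mulmxA mulmxA -adjM Lv mulmx0 mxE.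
Qed.

Lemma kraus_pure_output m (Ks : seq 'M[CC]_m) (psi phi : 'cV[CC]_m) :
  adj phi *m phi = 1%:M ->
  \sum_(K <- Ks) K *m (psi *m adj psi) *m adj K = phi *m adj phi ->
  {in Ks, forall K, K *m psi = (adj phi *m (K *m psi)) 0 0 *: phi}.
Proof.
move=> phi1 out K KKs.
set c := (adj phi *m (K *m psi)) 0 0; set u := K *m psi - c *: phi.
have phi_u : adj phi *m u = 0.
  rewrite mulmxBr -scalemxAr phi1; apply/matrixP => a b; rewrite !ord1.
  by rewrite /c !mxE eqxx mulr1 subrr.
have u_phi : adj u *m phi = 0 by rewrite -[phi]adjK -adjM phi_u adj0.
pose s K' := (adj u *m (K' *m psi)) 0 0.
(* Sandwiching the output between [u] gives [\sum |<u|K' psi>|^2 = |<u|phi>|^2 = 0]. *)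
have sum_s : \sum_(K' <- Ks) s K' * (s K')^* = 0.
  transitivity ((adj u *m (phi *m adj phi) *m u) 0 0); last first.
    by rewrite !mulmxA -(mulmxA _ _ u) phi_u mulmx0 mxE.
  rewrite -out mulmx_sumr mulmx_suml summxE; apply: eq_bigr => K' _.
  have -> : adj u *m (K' *m (psi *m adj psi) *m adj K') *m u =
            (adj u *m (K' *m psi)) *m adj (adj u *m (K' *m psi)).
    by rewrite !adjM adjK !mulmxA.
  by rewrite [in RHS]mxE big_ord1 adjE.
have sK : s K = 0.
  have ge0 K' : true -> 0 <= s K' * (s K')^* by rewrite -normCK exprn_ge0.
  move/eqP: sum_s; rewrite (psumr_eq0 _ ge0) => /allP /(_ K KKs) /=.
  by rewrite mul_conjC_eq0 => /eqP.
suff /eqP : u = 0 by rewrite subr_eq0 => /eqP.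
apply: adj_mul_self_eq0.
by rewrite {2}/u mulmxBr -scalemxAr u_phi scaler0 subr0.
Qed.

End Adjoint.

Section Tensor.
Variables (R : realType) (n : nat) (d : 'I_n -> nat).
Local Notation CC := (C R).
Local Notation B := (Basis d).
Local Notation N := (dimH d).
Local Notation Op := (Op R d).
Local Notation LocOps := (LocOps R d).

Lemma sum_basis (F : 'I_N -> CC) : \sum_(a < N) F a = \sum_(x : B) F (enum_rank x).
Proof. exact/reindex/onW_bij/enum_rank_bij. Qed.

Lemma eq_mx_basis (M M' : Op) :
  (forall x y : B, M (enum_rank x) (enum_rank y) = M' (enum_rank x) (enum_rank y)) ->
  M = M'.
Proof. by move=> eqM; apply/matrixP => a b; rewrite -(enum_valK a) -(enum_valK b). Qed.

Lemma tensE (K : LocOps) (x y : B) :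
  tens K (enum_rank x) (enum_rank y) = \prod_i K i (x i) (y i).
Proof. by rewrite mxE !enum_rankK. Qed.

Lemma eq_tens (A A' : LocOps) : (forall i, A i = A' i) -> tens A = tens A'.
Proof.
by move=> eqA; apply/matrixP => a b; rewrite !mxE; apply: eq_bigr => i _; rewrite eqA.
Qed.

Lemma tensM (A A' : LocOps) : tens A *m tens A' = tens (fun i => A i *m A' i).
Proof.
apply: eq_mx_basis => x y.
rewrite mxE sum_basis (tensE (fun i => A i *m A' i)).
transitivity (\sum_(z : B) \prod_i (A i (x i) (z i) * A' i (z i) (y i))).
  by apply: eq_bigr => z _; rewrite (tensE A) (tensE A') -big_split.
rewrite -(prod_sum_dffun (fun i j => A i (x i) j * A' i j (y i))).
by apply: eq_bigr => i _; rewrite mxE.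
Qed.

Lemma tens1 : tens (fun i => 1%:M) = 1%:M :> Op.
Proof.
apply: eq_mx_basis => x y.
rewrite tensE mxE (inj_eq enum_rank_inj).
have [->|nxy] := eqVneq x y.
  by rewrite big1 // => i _; rewrite mxE eqxx.
have [i xyi] : exists i, x i != y i.
  apply/existsP; rewrite -negb_forall; apply: contra nxy => /forallP xy.
  by apply/eqP/ffunP => i; apply/eqP.
by rewrite (bigD1 i) //= mxE (negPf xyi) mul0r.
Qed.

Lemma tens_eq0 (A : LocOps) i : A i = 0 -> tens A = 0.
Proof. by move=> Ai0; apply/matrixP => a b; rewrite !mxE (bigD1 i) //= Ai0 mxE mul0r. Qed.

Lemma adj_tens (A : LocOps) : adj (tens A) = tens (fun i => adj (A i)).
Proof.
apply/matrixP => a b; rewrite adjE !mxE rmorph_prod.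
by apply: eq_bigr => i _; rewrite adjE.
Qed.

Definition with_slot (f : LocOps) s (M : 'M[CC]_(d s)) : LocOps :=
  @dfwith _ (fun j => 'M[CC]_(d j)) f s M.
Arguments with_slot f s M : clear implicits.

Lemma with_slot_in f s M : with_slot f s M s = M.
Proof. exact: dfwith_in. Qed.

Lemma with_slot_out f s M j : j != s -> with_slot f s M j = f j.
Proof. by move=> js; rewrite /with_slot dfwith_out // eq_sym. Qed.

Lemma sum_tens_slot k (F : 'I_k -> LocOps) s :
  (forall o j, j != s -> F o j = 1%:M) ->
  \sum_(o < k) tens (F o) = tens (with_slot (fun j => 1%:M) s (\sum_(o < k) F o s)).
Proof.
move=> F1; apply: eq_mx_basis => x y.
rewrite summxE tensE (bigD1 s) //= with_slot_in summxE mulr_suml.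
apply: eq_bigr => o _; rewrite tensE (bigD1 s) //=; congr (_ * _).
by apply: eq_bigr => j js; rewrite F1 // with_slot_out.
Qed.

Definition basis_upd (y : B) i (a : 'I_(d i)) : B :=
  finfun (@dfwith _ (fun j => 'I_(d j)) (fun j => y j) i a).
Arguments basis_upd y i a : clear implicits.

Lemma basis_upd_in y i a : basis_upd y i a i = a.
Proof. by rewrite /basis_upd ffunE dfwith_in. Qed.

Lemma basis_upd_out y i a j : j != i -> basis_upd y i a j = y j.
Proof. by move=> ji; rewrite /basis_upd ffunE dfwith_out // eq_sym. Qed.

Definition agree_off i (x y : B) := [forall j, (j != i) ==> (x j == y j)].

Lemma sum_agree_off (G : B -> CC) y i :
  \sum_(z : B | agree_off i z y) G z = \sum_(a : 'I_(d i)) G (basis_upd y i a).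
Proof.
rewrite (reindex_onto (fun a => basis_upd y i a) (fun z => z i)); last first.
  move=> z /forallP zy; apply/ffunP => j.
  have [->|ji] := eqVneq j i; first by rewrite basis_upd_in.
  by rewrite basis_upd_out //; have /implyP/(_ ji)/eqP := zy j.
apply: eq_bigl => a; rewrite basis_upd_in eqxx andbT.
by apply/forallP => j; apply/implyP => ji; rewrite basis_upd_out.
Qed.

Lemma tens_slot_mulmxE (A : LocOps) (v : 'cV[CC]_N) i (y : B) (r : 'I_(d i)) :
  (forall j, j != i -> A j = 1%:M) ->
  (tens A *m v) (enum_rank (basis_upd y i r)) 0 =
  \sum_(a : 'I_(d i)) A i r a * v (enum_rank (basis_upd y i a)) 0.
Proof.
move=> A1; rewrite mxE sum_basis.
under eq_bigr => z _ do rewrite tensE.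
rewrite (bigID (fun z => agree_off i z y)) /= [X in _ + X]big1 ?addr0; last first.
  move=> z; rewrite negb_forall => /existsP[j].
  rewrite negb_imply => /andP[ji zyj].
  by rewrite (bigD1 j) //= A1 // basis_upd_out // mxE eq_sym (negPf zyj) !mul0r.
rewrite sum_agree_off; apply: eq_bigr => a _.
rewrite (bigD1 i) //= !basis_upd_in big1 ?mulr1 // => j ji.
by rewrite A1 // !basis_upd_out // mxE eqxx.
Qed.

Lemma mulmx_reducedE (v : 'cV[CC]_N) i (W : 'M[CC]_(d i)) r b :
  (W *m reduced v i) r b =
  \sum_(y : B | y i == b) (v (enum_rank y) 0)^* *
     \sum_(a : 'I_(d i)) W r a * v (enum_rank (basis_upd y i a)) 0.
Proof.
rewrite mxE.
transitivity (\sum_(a : 'I_(d i)) \sum_(x : B | x i == a)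
   \sum_(y : B | (y i == b) && agree_off i x y)
     W r (x i) * (v (enum_rank x) 0 * (v (enum_rank y) 0)^*)).
  apply: eq_bigr => a _; rewrite mxE mulr_sumr; apply: eq_bigr => x /eqP <-.
  by rewrite mulr_sumr.
have fibers (F : B -> CC) : \sum_a \sum_(x : B | x i == a) F x = \sum_x F x.
  by rewrite (partition_big (fun x : B => x i) predT).
rewrite fibers.
transitivity (\sum_(y : B | y i == b) \sum_(x : B | agree_off i x y)
     W r (x i) * (v (enum_rank x) 0 * (v (enum_rank y) 0)^*)).
  rewrite (exchange_big_dep predT) //= [RHS]big_mkcond /=.
  by apply: eq_bigr => y _; case: (y i == b) => //=; rewrite big1.
apply: eq_bigr => y _; rewrite sum_agree_off mulr_sumr; apply: eq_bigr => a _.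
by rewrite basis_upd_in mulrA mulrC mulrA.
Qed.

Lemma slot_annihilator_eq0 (v : 'cV[CC]_N) i (A : LocOps) :
  \rank (reduced v i) = d i -> (forall j, j != i -> A j = 1%:M) ->
  tens A *m v = 0 -> A i = 0.
Proof.
move=> full A1 Av0.
have Arho : A i *m reduced v i = 0.
  apply/matrixP => r b; rewrite mulmx_reducedE mxE big1 // => y _.
  by rewrite -tens_slot_mulmxE // Av0 mxE mulr0.
have rho_unit : reduced v i \in unitmx by rewrite -row_full_unit /row_full full.
by rewrite -(mulmxK rho_unit (A i)) Arho mul0mx.
Qed.

End Tensor.

Arguments with_slot {R n d} f s M.

Section LOCC.
Variables (R : realType) (n : nat) (d : 'I_n -> nat).
Local Notation CC := (C R).
Local Notation N := (dimH d).
Local Notation Op := (Op R d).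
Local Notation LocOps := (LocOps R d).

Lemma unitary_unit m (U : 'M[CC]_m) : unitary U -> U \in unitmx.
Proof. by case/mulmx1_unit. Qed.

Lemma local_round_complete (Ls : seq Op) : local_round Ls ->
  \sum_(L <- Ls) adj L *m L = 1%:M.
Proof.
case=> s [k [L [-> [unitary_off complete]]]].
rewrite big_map big_enum /=.
under eq_bigr => o _ do rewrite adj_tens tensM.
rewrite (sum_tens_slot (F := fun o j => adj (L o j) *m L o j) (s := s)); last first.
  by move=> o j js; apply: unitary_off.
rewrite -tens1; apply: eq_tens => j.
have [->|js] := eqVneq j s; first by rewrite with_slot_in complete.
by rewrite with_slot_out.
Qed.

Lemma tens_factor_unit (psi phi : 'cV[CC]_N) (Q : LocOps) c :
  fully_entangled phi -> c != 0 -> tens Q *m psi = c *: phi ->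
  forall i, Q i \in unitmx.
Proof.
move=> ent c0 Qpsi i; apply: contraT => Qi_nunit.
set W := kermx (Q i).
have W0 : W != 0.
  apply: contraNneq Qi_nunit => W0.
  have /eqP : \rank W = 0%N by rewrite W0 mxrank0.
  rewrite mxrank_ker subn_eq0 => rank_Qi.
  by rewrite -row_full_unit /row_full eqn_leq rank_leq_col.
set E := with_slot (fun j => 1%:M) i W.
have EQ : tens E *m tens Q = 0.
  by rewrite tensM; apply: (tens_eq0 (i := i)); rewrite /E with_slot_in mulmx_ker.
have Ephi : tens E *m phi = 0.
  have /eqP : c *: (tens E *m phi) = 0 by rewrite scalemxAr -Qpsi mulmxA EQ mul0mx.
  by rewrite scalemx_eq0 (negPf c0) => /eqP.
have E1 j : j != i -> E j = 1%:M by move=> ji; rewrite /E with_slot_out.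
have := slot_annihilator_eq0 (ent i) E1 Ephi.
by rewrite /E with_slot_in => W_eq0; rewrite W_eq0 eqxx in W0.
Qed.

(* Multiplying by the inverses of the invertible factors reduces [Lo Q] to an
   operator that is the identity off the slot [s]. *)
Lemma tens_round_eq0 (psi : 'cV[CC]_N) s (Lo Q : LocOps) :
  fully_entangled psi -> (forall j, j != s -> Lo j \in unitmx) ->
  (forall j, Q j \in unitmx) -> tens Lo *m tens Q *m psi = 0 -> tens Lo = 0.
Proof.
move=> ent Lo_unit Q_unit LQpsi.
pose LQ j := Lo j *m Q j.
pose M := with_slot (fun j => invmx (LQ j)) s 1%:M.
pose E j := M j *m LQ j.
have Epsi : tens E *m psi = 0.
  have -> : tens E = tens M *m (tens Lo *m tens Q) by rewrite !tensM.
  by rewrite -mulmxA LQpsi mulmx0.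
have E1 j : j != s -> E j = 1%:M.
  by move=> js; rewrite /E /M with_slot_out // mulVmx // unitmx_mul Lo_unit ?Q_unit.
have := slot_annihilator_eq0 (ent s) E1 Epsi.
rewrite /E /M with_slot_in mul1mx /LQ => LQs0.
by apply: (tens_eq0 (i := s)); rewrite -(mulmxK (Q_unit s) (Lo s)) LQs0 mul0mx.
Qed.

(* Product factorizations are unique only up to scalars, so invertibility is
   asked of every factorization. *)
Definition locally_invertible (K : Op) :=
  forall Q : LocOps, K = tens Q -> forall j, Q j \in unitmx.

Definition children (Ks : seq Op) (Ls : nat -> seq Op) : seq Op :=
  flatten [seq [seq L *m nth 0 Ks j | L <- Ls j] | j <- iota 0 (size Ks)].

Lemma childrenP (Ks : seq Op) Ls K : K \in children Ks Ls ->
  exists2 j, (j < size Ks)%N & exists2 L, L \in Ls j & K = L *m nth 0 Ks j.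
Proof.
case/flattenP => _ /mapP[j jKs ->] /mapP[L LLs ->].
by exists j; [rewrite mem_iota in jKs | exists L].
Qed.

Lemma mem_children (Ks : seq Op) Ls j L : (j < size Ks)%N -> L \in Ls j ->
  L *m nth 0 Ks j \in children Ks Ls.
Proof.
move=> jKs LLs; apply/flattenP; exists [seq L' *m nth 0 Ks j | L' <- Ls j].
  by apply: map_f; rewrite mem_iota.
exact: map_f.
Qed.

Lemma sum_adj_mul_children (Ks : seq Op) Ls :
  (forall j, (j < size Ks)%N -> local_round (Ls j)) ->
  \sum_(K <- children Ks Ls) adj K *m K = \sum_(K <- Ks) adj K *m K.
Proof.
move=> rounds; rewrite big_flatten big_map /= [RHS](big_nth 0) /index_iota subn0.
rewrite !big_seq; apply: eq_bigr => j; rewrite mem_iota => jKs; rewrite big_map.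
under eq_bigr => L _ do rewrite adjM mulmxA -(mulmxA _ (adj L)).
by rewrite -mulmx_suml -mulmx_sumr local_round_complete ?mulmx1 //; exact: rounds.
Qed.

Lemma LOCC_kraus_tens m (Ks : seq Op) :
  LOCC_kraus m Ks -> {in Ks, forall K, exists Q, K = tens Q}.
Proof.
elim=> {m Ks} [|m Ks Ls _ IH rounds].
  by move=> K; rewrite inE => /eqP ->; exists (fun _ => 1%:M); rewrite tens1.
move=> _ /childrenP[j jKs [L LLs ->]].
have [s [k [Lo [LsE _]]]] := rounds j jKs.
move: LLs; rewrite LsE => /mapP[o _ ->].
have [Q ->] := IH _ (mem_nth 0 jKs).
by exists (fun i => Lo o i *m Q i); rewrite tensM.
Qed.

Lemma LOCC_kraus_complete m (Ks : seq Op) :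
  LOCC_kraus m Ks -> \sum_(K <- Ks) adj K *m K = 1%:M.
Proof.
elim=> {m Ks} [|m Ks Ls _ IH rounds]; first by rewrite big_seq1 adj_id mul1mx.
by rewrite sum_adj_mul_children.
Qed.

Lemma locally_invertible_parents (psi : 'cV[CC]_N) (Ks : seq Op) Ls :
  (forall j, (j < size Ks)%N -> local_round (Ls j)) ->
  {in children Ks Ls, forall K, K *m psi != 0 -> locally_invertible K} ->
  {in Ks, forall K, K *m psi != 0 -> locally_invertible K}.
Proof.
move=> rounds inv_children K KKs Kpsi Q KQ j.
have jKs : (index K Ks < size Ks)%N by rewrite index_mem.
have /hasP[L LLs LKpsi] : has (fun L => L *m (K *m psi) != 0) (Ls (index K Ks)).
  apply: contraR Kpsi => /hasPn LKpsi0; apply/eqP.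
  apply: kraus_complete_eq0 (local_round_complete (rounds _ jKs)) _ => L /LKpsi0.
  by rewrite negbK => /eqP.
have [s [k [Lo [LsE _]]]] := rounds _ jKs.
move: (LLs); rewrite LsE => /mapP[o _ LE].
have := inv_children _ (mem_children jKs LLs).
rewrite nth_index // -mulmxA => /(_ LKpsi (fun i => Lo o i *m Q i)).
by rewrite LE KQ tensM => /(_ erefl j); rewrite unitmx_mul => /andP[].
Qed.

Lemma LOCC_kraus_null (psi : 'cV[CC]_N) m (Ks : seq Op) :
  psi != 0 -> fully_entangled psi -> LOCC_kraus m Ks ->
  {in Ks, forall K, K *m psi != 0 -> locally_invertible K} ->
  {in Ks, forall K, K *m psi = 0 -> K = 0}.
Proof.
move=> psi0 ent; elim=> {m Ks} [|m Ks Ls KsL IH rounds] inv.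
  by move=> K; rewrite inE => /eqP-> /eqP; rewrite mul1mx (negPf psi0).
have inv_parents := locally_invertible_parents rounds inv.
have null := IH inv_parents.
move=> _ /childrenP[j jKs [L LLs ->]].
set K := nth 0 Ks j; have KKs : K \in Ks := mem_nth 0 jKs.
have [s [k [Lo [LsE [unitary_off _]]]]] := rounds j jKs.
move: LLs; rewrite LsE => /mapP[o _ ->] LKpsi.
have [Kpsi0|Kpsi] := eqVneq (K *m psi) 0; first by rewrite (null _ KKs Kpsi0) mulmx0.
have [Q KQ] := LOCC_kraus_tens KsL KKs.
have Lo_unit i : i != s -> Lo o i \in unitmx by move/(unitary_off o)/unitary_unit.
by rewrite (tens_round_eq0 ent Lo_unit (inv_parents _ KKs Kpsi _ KQ)) ?mul0mx // -KQ.
Qed.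

Lemma kraus_seq_to_family (Ks : seq Op) :
  {in Ks, forall K, K != 0 -> exists2 Q : LocOps, K = tens Q & forall j, Q j \in unitmx} ->
  exists k (K : 'I_k -> LocOps), (forall o j, K o j \in unitmx) /\
    forall F : Op -> Op, F 0 = 0 -> \sum_(K <- Ks) F K = \sum_(o < k) F (tens (K o)).
Proof.
elim: Ks => [|K Ks IH] sep.
  by exists 0%N, (fun _ _ => 1%:M); split => [[]|F _]; rewrite ?big_nil ?big_ord0.
have [|k [Kf [Kf_unit sumKf]]] := IH.
  by move=> K' K'Ks; apply: sep; rewrite inE K'Ks orbT.
have [-> | K0] := eqVneq K 0.
  by exists k, Kf; split => // F F0; rewrite big_cons F0 add0r sumKf.
have [Q -> Q_unit] := sep K (mem_head _ _) K0.
exists k.+1, (fun o => if unlift ord0 o is Some o' then Kf o' else Q); split.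
  by move=> o j; case: (unlift ord0 o).
move=> F F0; rewrite big_cons big_ord_recl /= unlift_none.
by congr (_ + _); rewrite sumKf //; apply: eq_bigr => o _; rewrite liftK.
Qed.

End LOCC.

Unset Implicit Arguments.

Theorem lemma1 (R : realType) (n : nat) (d : 'I_n -> nat)
  (hd : forall i : 'I_n, (0 < d i)%N)
  (psi phi : 'cV[C R]_(dimH d))
  (hpsi : normalized psi) (hphi : normalized phi)
  (fpsi : fully_entangled psi) (fphi : fully_entangled phi) :
  LOCCN_maps psi phi -> SEP1_maps psi phi.
Proof.
move=> [m [Ks [KsL out]]].
have psi0 : psi != 0.
  apply: contraPneq hpsi => ->; rewrite /normalized mulmx0 => /matrixP/(_ 0 0).
  by rewrite !mxE => /eqP; rewrite eq_sym oner_eq0.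
have inv : {in Ks, forall K, K *m psi != 0 -> locally_invertible K}.
  move=> K KKs Kpsi Q KQ.
  have Kpsi_phi := kraus_pure_output hphi out KKs.
  set c := (adj phi *m (K *m psi)) 0 0 in Kpsi_phi.
  apply: (tens_factor_unit (psi := psi) (c := c) fphi); last by rewrite -KQ.
  by apply: contra_neq Kpsi => c0; rewrite Kpsi_phi c0 scale0r.
have null := LOCC_kraus_null psi0 fpsi KsL inv.
have [|k [K [K_unit sumK]]] := kraus_seq_to_family (Ks := Ks).
  move=> K KKs K0; have [Q KQ] := LOCC_kraus_tens KsL KKs.
  by exists Q => //; apply: inv KQ => //; exact: contra_neq (null K KKs) K0.
exists k, K; split => //; split.
  by rewrite -(sumK (fun K => adj K *m K)) ?(LOCC_kraus_complete KsL) // mulmx0.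
by rewrite -(sumK (fun K => K *m proj psi *m adj K)) // !mul0mx.
Qed.
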